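(* Let $A=\{2^{i+1}-1 : i\ge 0\}=\{1,3,7,15,\dots\}$. Then for every $n\ge 1$, $\mathrm{Total}(n,A)=2^n-n$.
   Context: For an integer $n\ge 0$ and a set $A$ of positive integers with $1\in A$, the abstract generalized 2048 game $\mathrm{AGG}(n,A)$ is played on $n$ indistinguishable cells. A position assigns to each cell either nothing (empty) or a tile with a value in $A$; the initial position has all cells empty. A step, performable from any position with at least one empty cell, consists of: (i) placing a new tile of value $1$ into a chosen empty cell; then (ii) optionally choosing pairwise disjoint sets of nonempty cells, each with tile-value sum in $A$, and merging each set into a single tile of that sum placed in one of its cells, the other cells of the set becoming empty. The game ends when after a step all cells are nonempty. A position is reachable if obtainable from the initial position by finitely many steps; its total value is the sum of its tile values. $\mathrm{Total}(n,A)$ is the supremum of total values of reachable positions of $\mathrm{AGG}(n,A)$. *)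

From mathcomp Require Import all_boot.
Set Implicit Arguments. Unset Strict Implicit. Unset Printing Implicit Defensive.

(* A position of AGG(n,A) on n indistinguishable cells is represented by the
   list of the values of its tiles (order irrelevant); the number of empty
   cells is n - size p.  The initial position is [::]. *)

(* One step from p to q: p has an empty cell; a tile 1 is placed (giving 1 :: p);
   then the tiles of 1 :: p are split into untouched tiles [rest] and
   pairwise disjoint nonempty sets [groups] of tiles, each with sum in A;
   each group is merged into a single tile of value its sum. *)
Definition agg_step (n : nat) (A : nat -> Prop) (p q : seq nat) : Prop :=
  size p < n /\
  exists (rest : seq nat) (groups : seq (seq nat)),
    perm_eq (1 :: p) (rest ++ flatten groups) /\
    (forall g, g \in groups -> g != [::] /\ A (sumn g)) /\
    q = rest ++ map sumn groups.

Inductive agg_reachable (n : nat) (A : nat -> Prop) : seq nat -> Prop :=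
  | agg_reach_init : agg_reachable n A [::]
  | agg_reach_step p q : agg_reachable n A p -> agg_step n A p q ->
      agg_reachable n A q.

(* Total(n,A) = v  (v a natural number): v is the supremum of the total values
   of reachable positions; for a set of naturals this means v is an upper
   bound that is attained. *)
Definition Total_is (n : nat) (A : nat -> Prop) (v : nat) : Prop :=
  (forall p, agg_reachable n A p -> sumn p <= v) /\
  (exists p, agg_reachable n A p /\ sumn p = v).

Definition A_mersenne : nat -> Prop := fun m => exists i, m = 2 ^ i.+1 - 1.

(* Every tile of a reachable position is a Mersenne number 2^k - 1, and for
   each k >= 2 at most n - k tiles are >= 2^k - 1; with n cells this caps the
   total at 2^n - n.  The bound on tiles >= 2^k - 1 survives a step because
   the capped total  sum_v min(v, 2^k - 1)  grows by at most one per step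
   (merging never increases it), while n - k + 1 such tiles would force it
   beyond what the bounds for the smaller ranks allow.  The value 2^n - n is
   attained by the staircase 2^(n-1) - 1, ..., 3, 1, 1, each 2^(k+1) - 1
   being merged from a fresh 1 and two previously built copies of 2^k - 1. *)

From mathcomp Require Import all_boot zify.

Set Implicit Arguments.
Unset Strict Implicit.
Unset Printing Implicit Defensive.

Definition capsum (c : nat) (s : seq nat) : nat := sumn [seq minn v c | v <- s].

Lemma capsum_cons c v s : capsum c (v :: s) = minn v c + capsum c s.
Proof. by []. Qed.

Lemma capsum_cat c s1 s2 : capsum c (s1 ++ s2) = capsum c s1 + capsum c s2.
Proof. by rewrite /capsum map_cat sumn_cat. Qed.

Lemma capsum_perm c s1 s2 : perm_eq s1 s2 -> capsum c s1 = capsum c s2.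
Proof. by move=> perm12; apply/perm_sumn/perm_map. Qed.

Lemma capsum0 s : capsum 0 s = 0.
Proof. by elim: s => //= v s; rewrite minn0. Qed.

Lemma capsum_id c (s : seq nat) :
  {in s, forall v, v <= c} -> capsum c s = sumn s.
Proof.
move=> le_sc; congr sumn; rewrite -[RHS]map_id.
by apply/eq_in_map => v /le_sc/minn_idPl.
Qed.

Lemma leq_minn_sumn c s : minn (sumn s) c <= capsum c s.
Proof.
elim: s => [|v s IH]; first by rewrite /= min0n.
by rewrite /= capsum_cons; lia.
Qed.

Lemma capsum_map_sumn c ss : capsum c (map sumn ss) <= capsum c (flatten ss).
Proof.
elim: ss => //= s ss IH; rewrite capsum_cat.
exact: leq_add (leq_minn_sumn c s) IH.
Qed.

Lemma leq_mul_count_capsum c s : c * count (leq c) s <= capsum c s.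
Proof.
elim: s => [|v s IH] /=; first by rewrite muln0.
by rewrite mulnDr leq_add //; case: leqP => /=; lia.
Qed.

Lemma size_flatten_nonempty (T : eqType) (ss : seq (seq T)) :
  {in ss, forall s, s != [::]} -> size ss <= size (flatten ss).
Proof.
rewrite size_flatten; elim: ss => //= s ss IH nonempty_ss.
rewrite -add1n leq_add ?lt0n ?size_eq0 ?nonempty_ss ?mem_head //.
by apply: IH => t ss_t; rewrite nonempty_ss // inE ss_t orbT.
Qed.

Section GenericSteps.

Variables (n : nat) (A : nat -> Prop).

Lemma agg_step_size p q : agg_step n A p q -> size q <= n.
Proof.
case=> lt_pn [rest [ss [perm_p [ss_ok ->]]]].
rewrite size_cat size_map; have := perm_size perm_p; rewrite /= size_cat.
have : size ss <= size (flatten ss).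
  by apply: size_flatten_nonempty => s /ss_ok[].
lia.
Qed.

Lemma agg_step_in (p q : seq nat) : A 1 -> {in p, forall x, A x} ->
  agg_step n A p q -> {in q, forall x, A x}.
Proof.
move=> A1 A_p [_ [rest [ss [perm_p [ss_ok ->]]]]] x.
rewrite mem_cat => /orP[rest_x | /mapP[s /ss_ok[_ ?] ->] //].
have : x \in 1 :: p by rewrite (perm_mem perm_p) mem_cat rest_x.
by rewrite inE => /predU1P[-> | /A_p].
Qed.

Lemma agg_step_capsum c p q : 0 < c -> agg_step n A p q ->
  capsum c q <= (capsum c p).+1.
Proof.
move=> c_gt0 [_ [rest [ss [perm_p [_ ->]]]]].
have -> : (capsum c p).+1 = capsum c (1 :: p).
  by rewrite capsum_cons (minn_idPl c_gt0).
by rewrite (capsum_perm c perm_p) !capsum_cat leq_add2l capsum_map_sumn.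
Qed.

Lemma agg_reachable_size p : agg_reachable n A p -> size p <= n.
Proof. by case=> // ? ? _ /agg_step_size. Qed.

Lemma agg_reachable_in p : A 1 -> agg_reachable n A p -> {in p, forall x, A x}.
Proof. by move=> A1; elim=> // ? ? _ A_p; apply: agg_step_in. Qed.

Lemma agg_step_merge p rest s : size p < n -> perm_eq (1 :: p) (rest ++ s) ->
  s != [::] -> A (sumn s) -> agg_step n A p (rcons rest (sumn s)).
Proof.
move=> lt_pn perm_p nz_s A_s; split=> //.
exists rest, [:: s]; rewrite cats1 /= cats0; split=> //; split=> // t.
by rewrite inE => /eqP ->.
Qed.

Lemma agg_reachable_rcons1 p : A 1 -> agg_reachable n A p -> size p < n ->
  agg_reachable n A (rcons p 1).
Proof.
move=> A1 reach_p lt_pn; apply: (agg_reach_step reach_p).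
by apply: (@agg_step_merge p p [:: 1]) => //; rewrite cats1 perm_sym perm_rcons.
Qed.

End GenericSteps.

Definition mersenne (k : nat) : nat := 2 ^ k - 1.

Lemma A_mersenne1 : A_mersenne 1.
Proof. by exists 0. Qed.

Lemma mersenneS k : mersenne k.+1 = mersenne k + 2 ^ k.
Proof. by rewrite /mersenne expnS; have := expn_gt0 2 k; lia. Qed.

Lemma leq_mersenne i j : (mersenne i <= mersenne j) = (i <= j).
Proof. by rewrite /mersenne leq_sub2rE ?expn_gt0 // leq_exp2l. Qed.

Lemma minn_mersenneS i k :
  minn (mersenne i) (mersenne k.+1)
  = minn (mersenne i) (mersenne k) + 2 ^ k * (mersenne k.+1 <= mersenne i).
Proof.
rewrite leq_mersenne; case: (leqP k.+1 i) => [lt_ki | le_ik].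
- rewrite (minn_idPr _) ?(minn_idPr _) ?leq_mersenne ?(ltnW lt_ki) //.
  by rewrite mersenneS muln1.
- by rewrite !(minn_idPl _) ?leq_mersenne ?muln0 ?addn0 // -ltnS ltnW.
Qed.

Lemma capsum_mersenneS k (s : seq nat) : {in s, forall x, A_mersenne x} ->
  capsum (mersenne k.+1) s
  = capsum (mersenne k) s + 2 ^ k * count (leq (mersenne k.+1)) s.
Proof.
elim: s => [|v s IH] A_s /=; first by rewrite muln0.
have [i ->] := A_s v (mem_head v s); rewrite -/(mersenne i.+1) !capsum_cons.
rewrite minn_mersenneS IH => [|x s_x]; last by apply: A_s; rewrite inE s_x orbT.
rewrite mulnDr; lia.
Qed.

Lemma capsum_mersenne_id k (s : seq nat) : {in s, forall x, A_mersenne x} ->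
  count (leq (mersenne k.+1)) s = 0 -> capsum (mersenne k) s = sumn s.
Proof.
move=> A_s /eqP; rewrite -leqn0 leqNgt -has_count => /hasPn none_s.
apply: capsum_id => v s_v; have := none_s v s_v; have [i ->] := A_s v s_v.
by rewrite -/(mersenne i.+1) !leq_mersenne -ltnNge ltnS.
Qed.

Definition rank_bounded (n : nat) (p : seq nat) : Prop :=
  forall k, count (leq (mersenne k.+2)) p <= n - k.+2.

Fixpoint rank_budget (n s : nat) : nat :=
  if s is s'.+1 then rank_budget n s' + 2 ^ s * (n - s.+1) else 0.

Lemma leq_capsum_rank_budget n (p : seq nat) :
  {in p, forall x, A_mersenne x} -> rank_bounded n p ->
  forall s, capsum (mersenne s.+1) p <= size p + rank_budget n s.
Proof.
move=> A_p rank_p; elim=> [|s IH].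
  by rewrite capsum_mersenneS // capsum0 mul1n addn0 count_size.
by rewrite capsum_mersenneS //= addnA leq_add // leq_mul.
Qed.

(* For s < n this is an equality; the truncated [n - s.+1] makes it hold for
   every s. *)
Lemma rank_budget_bound n s :
  n + rank_budget n s + s <= (n - s.+1).+1 * mersenne s.+1.
Proof.
elim: s => [|s IH] /=; first by rewrite /mersenne; lia.
have pow_m : 2 ^ s.+1 = (mersenne s.+1).+1.
  by rewrite /mersenne; have := expn_gt0 2 s.+1; lia.
rewrite mersenneS pow_m; move: IH; set m := mersenne s.+1.
case: (leqP s.+2 n) => [le_sn | lt_ns].
- have -> : n - s.+1 = (n - s.+2).+1 by lia.
  set K := n - s.+2; nia.
- have -> : n - s.+2 = 0 by lia.
  have -> : n - s.+1 = 0 by lia.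
  lia.
Qed.

Lemma agg_step_rank_bounded n (p q : seq nat) :
  {in p, forall x, A_mersenne x} -> rank_bounded n p ->
  agg_step n A_mersenne p q -> rank_bounded n q.
Proof.
move=> A_p rank_p step_pq k.
have m_gt0 : 0 < mersenne k.+2.
  by rewrite /mersenne subn_gt0 -{1}(expn0 2) ltn_exp2l.
have step_cap := agg_step_capsum m_gt0 step_pq.
have cap_p := leq_capsum_rank_budget A_p rank_p k.+1.
have budget := rank_budget_bound n k.+1.
have count_cap := leq_mul_count_capsum (mersenne k.+2) q.
have lt_pn := proj1 step_pq.
rewrite -ltnS -(ltn_pmul2l m_gt0) [_ * _.+1]mulnC; lia.
Qed.

Lemma agg_reachable_rank_bounded n p :
  agg_reachable n A_mersenne p -> rank_bounded n p.
Proof.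
elim=> [//|p' q reach_p' rank_p' step_pq].
exact: agg_step_rank_bounded (agg_reachable_in A_mersenne1 reach_p') _ step_pq.
Qed.

Lemma agg_reachable_rcons_mersenne n j p : agg_reachable n A_mersenne p ->
  size p + j.+2 <= n -> agg_reachable n A_mersenne (rcons p (mersenne j.+1)).
Proof.
elim: j p => [|j IH] p reach_p room_p.
  by apply: agg_reachable_rcons1 A_mersenne1 reach_p _; lia.
have reach1 := IH p reach_p (ltac:(lia)).
have reach2 := IH _ reach1 (ltac:(rewrite size_rcons; lia)).
have merge3 : mersenne j.+2 = sumn [:: 1; mersenne j.+1; mersenne j.+1].
  by rewrite /= mersenneS /mersenne; have := expn_gt0 2 j.+1; lia.
rewrite merge3; apply: (agg_reach_step reach2); apply: agg_step_merge.
- by rewrite !size_rcons; lia.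
- by rewrite -!cats1 -catA -cat1s perm_catCA.
- by [].
- by rewrite -merge3; exists j.+1.
Qed.

Fixpoint staircase (i : nat) : seq nat :=
  if i is i'.+1 then mersenne i :: staircase i' else [:: 1].

Lemma sumn_staircase i : sumn (staircase i) + i.+1 = 2 ^ i.+1.
Proof.
elim: i => [|i IH] //=; move: IH.
by rewrite /mersenne !expnS; have := expn_gt0 2 i; lia.
Qed.

Lemma agg_reachable_staircase n i p : agg_reachable n A_mersenne p ->
  size p + i.+1 <= n -> agg_reachable n A_mersenne (p ++ staircase i).
Proof.
elim: i p => [|i IH] p reach_p room_p.
  by rewrite cats1; apply: agg_reachable_rcons1 A_mersenne1 reach_p _; lia.
have reach1 := agg_reachable_rcons_mersenne reach_p room_p.
have := IH _ reach1 (ltac:(rewrite size_rcons; lia)).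
by rewrite -cats1 -catA.
Qed.

Theorem mainTheorem15 (n : nat) : 1 <= n -> Total_is n A_mersenne (2 ^ n - n).
Proof.
case: n => [//|m] _; split.
- move=> p reach_p.
  have A_p := agg_reachable_in A_mersenne1 reach_p.
  have rank_p := agg_reachable_rank_bounded reach_p.
  have no_top : count (leq (mersenne m.+2)) p = 0.
    by have := rank_p m; lia.
  rewrite -(capsum_mersenne_id A_p no_top).
  have := leq_capsum_rank_budget A_p rank_p m.
  have := rank_budget_bound m.+1 m.
  have := agg_reachable_size reach_p.
  rewrite subnn /mersenne; lia.
- exists (staircase m); split.
  + by apply: (agg_reachable_staircase (agg_reach_init _ _)).
  + by have := sumn_staircase m; lia.
Qed.
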